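(* There is an absolute constant $c$ such that the following holds. Let $S$ be a finite set of $n\ge 2$ points in the plane and let $\mathcal{F}$ be the family of axis-parallel rectangles. Then the edges of the Delaunay-graph $D(S,\mathcal{F})$ can be colored with at most $c\log n$ colors (i.e., $O(\log n)$ colors) such that every axis-parallel rectangle that contains at least three points of $S$ contains Delaunay-edges of different colors.
   Context: For a finite point set $S$ and a family of regions $\mathcal{F}$, the Delaunay-edges of $S$ with respect to $\mathcal{F}$ are the $2$-element subsets $\{p,q\}\subseteq S$ for which there is $F\in\mathcal{F}$ with $S\cap F=\{p,q\}$; the Delaunay-graph $D(S,\mathcal{F})$ has vertex set $S$ and the Delaunay-edges as edges. A rectangle contains a Delaunay-edge if it contains both endpoints. Axis-parallel rectangles are sets $[a,b]\times[c,d]$. *)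

From Stdlib Require Import Reals List.
Open Scope R_scope.

Definition point := (R * R)%type.

Definition in_rect (a b c d : R) (p : point) : Prop :=
  a <= fst p <= b /\ c <= snd p <= d.

Definition delaunay_edge (S : list point) (p q : point) : Prop :=
  p <> q /\ In p S /\ In q S /\
  exists a b c d : R,
    forall x, In x S -> (in_rect a b c d x <-> (x = p \/ x = q)).

From Stdlib Require Import Reals List Lra Lia Classical.
Open Scope R_scope.

(** Sort [S] lexicographically (by abscissa, then ordinate) and view the ranks
    as leaves of a complete binary tree of depth [F = log2 n + 1].  An edge
    [pq] is coloured by the level of the lowest common ancestor of the ranks
    of [p] and [q] together with one bit recording whether [pq] is vertical:
    [2F + 2] colours.  For leaves [a < b < c] the ancestors of [ab] and [bc]
    lie at different levels.

    In a rectangle, among the pairs of its points having a property that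
    passes from a pair to the sub-pair formed with any point of their bounding
    box, one spanning a minimal box is a Delaunay edge.  If the rectangle
    contains a vertical pair and a point off that line, this gives a vertical
    and a non-vertical Delaunay edge.  Otherwise its points lie on one
    vertical line or have distinct abscissae; then bounding boxes only contain
    lexicographically intermediate points, and the lexicographic median of
    three points is joined by Delaunay edges to a smaller and to a larger
    point, with equal verticality bits but different levels. *)

(* For distinct leaves [a, b < 2 ^ F] of the complete binary tree of depth [F],
   the height of their lowest common ancestor minus one. *)
Fixpoint lca_level (F a b : nat) : nat :=
  match F with
  | O => O
  | S F' => if Nat.eqb (a / 2) (b / 2) then O else S (lca_level F' (a / 2) (b / 2))
  end.

Lemma lca_level_sym F : forall a b, lca_level F a b = lca_level F b a.
Proof.
  induction F as [|F IH]; intros a b; cbn [lca_level]; auto.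
  rewrite Nat.eqb_sym, IH. reflexivity.
Qed.

Lemma lca_level_le F : forall a b, (lca_level F a b <= F)%nat.
Proof.
  induction F as [|F IH]; intros a b; cbn [lca_level]; auto.
  destruct (Nat.eqb (a / 2) (b / 2)); [lia|].
  specialize (IH (a / 2)%nat (b / 2)%nat). lia.
Qed.

Lemma div2_bounds (a : nat) : (2 * (a / 2) <= a < 2 * (a / 2) + 2)%nat.
Proof.
  pose proof (Nat.div_mod_eq a 2). pose proof (Nat.mod_upper_bound a 2). lia.
Qed.

Lemma lca_level_neq F : forall a b c,
  (a < b)%nat -> (b < c)%nat -> (c < 2 ^ F)%nat -> lca_level F a b <> lca_level F b c.
Proof.
  induction F as [|F IH]; intros a b c Hab Hbc Hc; cbn [lca_level] in *; [simpl in Hc; lia|].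
  pose proof (div2_bounds a); pose proof (div2_bounds b); pose proof (div2_bounds c).
  destruct (Nat.eqb_spec (a / 2) (b / 2)); destruct (Nat.eqb_spec (b / 2) (c / 2)); try lia.
  rewrite Nat.pow_succ_r' in Hc. intros Heq%Nat.succ_inj. revert Heq. apply IH; lia.
Qed.

Lemma filter_length_mono {A} (f g : A -> bool) (l : list A) :
  (forall x, In x l -> f x = true -> g x = true) ->
  (length (filter f l) <= length (filter g l))%nat.
Proof.
  induction l as [|y l IH]; intros Hfg; simpl; auto.
  specialize (IH (fun x Hx => Hfg x (or_intror Hx))).
  destruct (f y) eqn:Hfy.
  - rewrite (Hfg y (or_introl eq_refl) Hfy). simpl; lia.
  - destruct (g y); simpl; lia.
Qed.

Lemma filter_length_lt {A} (f g : A -> bool) (l : list A) :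
  (forall x, In x l -> f x = true -> g x = true) ->
  (exists x, In x l /\ f x = false /\ g x = true) ->
  (length (filter f l) < length (filter g l))%nat.
Proof.
  induction l as [|y l IH]; intros Hfg [x [Hx [Hfx Hgx]]]; [destruct Hx|].
  assert (Hfg' : forall x, In x l -> f x = true -> g x = true) by (intros; apply Hfg; simpl; auto).
  pose proof (filter_length_mono f g l Hfg'). simpl.
  destruct Hx as [<-|Hx].
  - rewrite Hfx, Hgx. simpl; lia.
  - specialize (IH Hfg' (ex_intro _ x (conj Hx (conj Hfx Hgx)))).
    destruct (f y) eqn:Hfy.
    + rewrite (Hfg y (or_introl eq_refl) Hfy). simpl; lia.
    + destruct (g y); simpl; lia.
Qed.

Definition lex_lt (p q : point) : Prop :=
  fst p < fst q \/ (fst p = fst q /\ snd p < snd q).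

Lemma lex_lt_dec p q : {lex_lt p q} + {~ lex_lt p q}.
Proof.
  unfold lex_lt.
  destruct (Rlt_dec (fst p) (fst q)); [left; lra|].
  destruct (Req_EM_T (fst p) (fst q)); [|right; lra].
  destruct (Rlt_dec (snd p) (snd q)); [left|right]; lra.
Qed.

Lemma lex_lt_irrefl p : ~ lex_lt p p.
Proof. unfold lex_lt; lra. Qed.

Lemma lex_lt_trans p q r : lex_lt p q -> lex_lt q r -> lex_lt p r.
Proof. unfold lex_lt; lra. Qed.

Lemma lex_lt_total (p q : point) : p <> q -> lex_lt p q \/ lex_lt q p.
Proof.
  destruct p as [x y], q as [x' y']; unfold lex_lt; simpl; intros Hne.
  destruct (Rtotal_order x x') as [|[<-|]]; [lra| |lra].
  destruct (Rtotal_order y y') as [|[<-|]]; [lra|congruence|lra].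
Qed.

Definition lex_rank (S : list point) (p : point) : nat :=
  length (filter (fun s => if lex_lt_dec s p then true else false) S).

Lemma lex_rank_lt S p q : In p S -> lex_lt p q -> (lex_rank S p < lex_rank S q)%nat.
Proof.
  intros Hp Hpq. apply filter_length_lt.
  - intros s _. destruct (lex_lt_dec s p); [|discriminate].
    destruct (lex_lt_dec s q); auto. exfalso; eauto using lex_lt_trans.
  - exists p. split; auto.
    destruct (lex_lt_dec p p); [exfalso; eapply lex_lt_irrefl; eauto|].
    destruct (lex_lt_dec p q); tauto.
Qed.

Lemma lex_rank_bound S p : In p S -> (lex_rank S p < length S)%nat.
Proof.
  intros Hp. unfold lex_rank. rewrite <- (filter_true S) at 2.
  apply filter_length_lt; auto.
  exists p. split; auto.
  destruct (lex_lt_dec p p); [exfalso; eapply lex_lt_irrefl; eauto|auto].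
Qed.

Lemma exists_chain3 {A} (lt : A -> A -> Prop) (P : A -> Prop) (x y z : A) :
  (forall u v, u <> v -> lt u v \/ lt v u) ->
  x <> y -> x <> z -> y <> z -> P x -> P y -> P z ->
  exists l m h, P l /\ P m /\ P h /\ lt l m /\ lt m h.
Proof.
  intros Htot Hxy Hxz Hyz Px Py Pz.
  destruct (Htot x y Hxy), (Htot y z Hyz), (Htot x z Hxz);
    solve [ exists x, y, z; auto | exists x, z, y; auto | exists y, x, z; auto
          | exists y, z, x; auto | exists z, x, y; auto | exists z, y, x; auto ].
Qed.

Definition bbox (p q r : point) : Prop :=
  in_rect (Rmin (fst p) (fst q)) (Rmax (fst p) (fst q))
          (Rmin (snd p) (snd q)) (Rmax (snd p) (snd q)) r.

Definition bbox_closed (T : point -> Prop) : Prop :=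
  forall p q r, T p -> T q -> bbox p q r -> T r.

Lemma between_Rmin_Rmax lo hi a b r :
  lo <= a <= hi -> lo <= b <= hi -> Rmin a b <= r <= Rmax a b -> lo <= r <= hi.
Proof. unfold Rmin, Rmax; destruct (Rle_dec a b); lra. Qed.

Lemma in_rect_bbox_closed a b c d : bbox_closed (in_rect a b c d).
Proof.
  intros p q r [Hpx Hpy] [Hqx Hqy] [Hrx Hry].
  split; [exact (between_Rmin_Rmax _ _ _ _ _ Hpx Hqx Hrx)
        |exact (between_Rmin_Rmax _ _ _ _ _ Hpy Hqy Hry)].
Qed.

Lemma bbox_sym p q r : bbox p q r -> bbox q p r.
Proof.
  unfold bbox.
  rewrite (Rmin_comm (fst q)), (Rmax_comm (fst q)), (Rmin_comm (snd q)), (Rmax_comm (snd q)).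
  auto.
Qed.

Lemma bbox_endpoints p q : bbox p q p /\ bbox p q q.
Proof.
  unfold bbox, in_rect, Rmin, Rmax.
  destruct (Rle_dec (fst p) (fst q)), (Rle_dec (snd p) (snd q)); lra.
Qed.

Definition l1_dist (p q : point) : R := Rabs (fst p - fst q) + Rabs (snd p - snd q).

Lemma Rabs_between_le a b r :
  Rmin a b <= r <= Rmax a b ->
  Rabs (r - b) <= Rabs (a - b) /\ (r <> a -> Rabs (r - b) < Rabs (a - b)).
Proof.
  unfold Rmin, Rmax; destruct (Rle_dec a b); intros Hr; split; try intros Hra;
    unfold Rabs; repeat destruct Rcase_abs;
    try (destruct (Rtotal_order r a) as [|[|]]; [|contradiction|]); lra.
Qed.

Lemma l1_dist_bbox_lt p q r : bbox p q r -> r <> p -> l1_dist r q < l1_dist p q.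
Proof.
  intros [Hx Hy] Hrp. unfold l1_dist.
  destruct (Rabs_between_le _ _ _ Hx) as [Hx1 Hx2].
  destruct (Rabs_between_le _ _ _ Hy) as [Hy1 Hy2].
  destruct (Req_EM_T (fst r) (fst p)) as [Ex|Nx]; [|specialize (Hx2 Nx); lra].
  destruct (Req_EM_T (snd r) (snd p)) as [Ey|Ny]; [|specialize (Hy2 Ny); lra].
  destruct r, p; simpl in *; congruence.
Qed.

Lemma l1_dist_sym p q : l1_dist p q = l1_dist q p.
Proof.
  unfold l1_dist. rewrite (Rabs_minus_sym (fst p)), (Rabs_minus_sym (snd p)). reflexivity.
Qed.

Lemma delaunay_edge_of_bbox S p q :
  p <> q -> In p S -> In q S ->
  (forall r, In r S -> bbox p q r -> r = p \/ r = q) -> delaunay_edge S p q.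
Proof.
  intros Hpq Hp Hq Hbox. repeat split; auto.
  exists (Rmin (fst p) (fst q)), (Rmax (fst p) (fst q)),
         (Rmin (snd p) (snd q)), (Rmax (snd p) (snd q)).
  intros x Hx; split; [now apply Hbox|].
  intros [->| ->]; apply bbox_endpoints.
Qed.

Lemma exists_min_in_list {A} (l : list A) (P : A -> Prop) (g : A -> R) :
  (exists a, In a l /\ P a) ->
  exists m, In m l /\ P m /\ forall a, In a l -> P a -> g m <= g a.
Proof.
  induction l as [|x l IH]; intros [w [Hw Pw]]; [destruct Hw|].
  destruct (classic (exists a, In a l /\ P a)) as [Hl|Hl].
  - destruct (IH Hl) as [m [Hm [Pm Hmin]]].
    destruct (classic (P x /\ g x <= g m)) as [[Px Hxm]|Hx].
    + exists x. repeat split; simpl; auto.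
      intros a [<-|Ha] Pa; [lra|]. specialize (Hmin a Ha Pa); lra.
    + exists m. repeat split; simpl; auto.
      intros a [<-|Ha] Pa; auto. apply Rnot_lt_le. intros Hlt. apply Hx. split; auto; lra.
  - exists x. destruct Hw as [<-|Hw]; [|exfalso; eauto].
    repeat split; simpl; auto.
    intros a [<-|Ha] Pa; [lra|exfalso; eauto].
Qed.

Lemma exists_delaunay_pair S T (Pr : point -> point -> Prop) :
  bbox_closed T ->
  (forall p q r, In p S -> T p -> In q S -> T q -> In r S -> T r -> Pr p q ->
     bbox p q r -> r <> p -> r <> q -> Pr r q \/ Pr p r) ->
  (exists p q, p <> q /\ In p S /\ T p /\ In q S /\ T q /\ Pr p q) ->
  exists p q, delaunay_edge S p q /\ T p /\ T q /\ Pr p q.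
Proof.
  intros HT Hshrink [p0 [q0 H0]].
  (* A [Pr]-pair of minimal [l1_dist] spans a box with no further point of [S]. *)
  set (Good := fun pq : point * point =>
         fst pq <> snd pq /\ T (fst pq) /\ T (snd pq) /\ Pr (fst pq) (snd pq)).
  destruct (exists_min_in_list (list_prod S S) Good (fun pq => l1_dist (fst pq) (snd pq)))
    as [[p q] [Hin [[Hpq [Tp [Tq Ppq]]] Hmin]]].
  { exists (p0, q0). split; [apply in_prod|unfold Good; simpl]; tauto. }
  apply in_prod_iff in Hin as [Hp Hq]. simpl in *.
  exists p, q. split; [|tauto].
  apply delaunay_edge_of_bbox; auto.
  intros r Hr Hb.
  destruct (classic (r = p)) as [|Hrp]; auto. destruct (classic (r = q)) as [|Hrq]; auto.
  exfalso. pose proof (HT p q r Tp Tq Hb) as Tr.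
  destruct (Hshrink p q r Hp Tp Hq Tq Hr Tr Ppq Hb Hrp Hrq) as [Hrq'|Hpr].
  - assert (Hm := Hmin (r, q) ltac:(now apply in_prod) ltac:(unfold Good; simpl; tauto)).
    simpl in Hm. pose proof (l1_dist_bbox_lt p q r Hb Hrp). lra.
  - assert (Hm := Hmin (p, r) ltac:(now apply in_prod)
                    ltac:(unfold Good; simpl; split; [congruence|tauto])).
    simpl in Hm. pose proof (l1_dist_bbox_lt q p r (bbox_sym _ _ _ Hb) Hrq).
    rewrite (l1_dist_sym r p), (l1_dist_sym q p) in *. lra.
Qed.

Lemma bbox_same_fst p q r : fst q = fst p -> bbox p q r -> fst r = fst p.
Proof.
  intros Hq [Hx _]. rewrite Hq, Rmin_left, Rmax_left in Hx by lra. lra.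
Qed.

Lemma lex_between_same_column p q r :
  fst r = fst p -> fst q = fst p -> lex_lt p q -> bbox p q r -> r <> p -> r <> q ->
  lex_lt p r /\ lex_lt r q.
Proof.
  intros Hr Hq Hpq [_ Hy] Hrp Hrq. unfold lex_lt in *.
  rewrite Rmin_left, Rmax_right in Hy by lra.
  assert (snd r <> snd p) by (intros ?; apply Hrp, injective_projections; auto).
  assert (snd r <> snd q) by (intros ?; apply Hrq, injective_projections; congruence).
  lra.
Qed.

Lemma lex_between_distinct_columns p q r :
  fst r <> fst p -> fst r <> fst q -> lex_lt p q -> bbox p q r ->
  lex_lt p r /\ lex_lt r q.
Proof.
  intros Hrp Hrq Hpq Hb. unfold lex_lt in *.
  destruct (Req_EM_T (fst q) (fst p)) as [E|N].
  - exfalso. exact (Hrp (bbox_same_fst p q r E Hb)).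
  - destruct Hb as [Hx _]. rewrite Rmin_left, Rmax_right in Hx by lra. lra.
Qed.

Definition column_uniform (S : list point) (T : point -> Prop) : Prop :=
  forall u v w, In u S -> T u -> In v S -> T v -> In w S -> T w ->
    u <> v -> fst u = fst v -> fst w = fst u.

Lemma lex_between_of_column_uniform S T p q r :
  column_uniform S T -> In p S -> T p -> In q S -> T q -> In r S -> T r ->
  lex_lt p q -> bbox p q r -> r <> p -> r <> q -> lex_lt p r /\ lex_lt r q.
Proof.
  intros HU Hp Tp Hq Tq Hr Tr Hpq Hb Hrp Hrq.
  destruct (Req_EM_T (fst r) (fst p)) as [Ep|Np].
  - apply lex_between_same_column; auto.
    rewrite <- Ep. exact (HU r p q Hr Tr Hp Tp Hq Tq Hrp Ep).
  - destruct (Req_EM_T (fst r) (fst q)) as [Eq|Nq].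
    + exfalso. apply Np. symmetry. rewrite <- (HU r q p Hr Tr Hq Tq Hp Tp Hrq Eq). reflexivity.
    + apply lex_between_distinct_columns; auto.
Qed.

Lemma column_uniform_chain_parity S T p m q :
  column_uniform S T -> In p S -> T p -> In m S -> T m -> In q S -> T q ->
  p <> m -> m <> q -> (fst p = fst m <-> fst m = fst q).
Proof.
  intros HU Hp Tp Hm Tm Hq Tq Hpm Hmq. split; intros E.
  - rewrite (HU p m q Hp Tp Hm Tm Hq Tq Hpm E). auto.
  - rewrite (HU m q p Hm Tm Hq Tq Hp Tp Hmq E). auto.
Qed.

Lemma delaunay_lex_chain S T x y z :
  bbox_closed T -> column_uniform S T ->
  In x S -> In y S -> In z S -> x <> y -> x <> z -> y <> z -> T x -> T y -> T z ->
  exists p m q, delaunay_edge S p m /\ delaunay_edge S m q /\ T p /\ T m /\ T q /\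
    lex_lt p m /\ lex_lt m q.
Proof.
  intros HT HU Hx Hy Hz Hxy Hxz Hyz Tx Ty Tz.
  destruct (exists_chain3 lex_lt (fun p => In p S /\ T p) x y z lex_lt_total)
    as [l [m [h [[Hl Tl] [[Hm Tm] [[Hh Th] [Hlm Hmh]]]]]]]; auto.
  destruct (exists_delaunay_pair S T (fun p q => q = m /\ lex_lt p m))
    as [p [m' [Dpm [Tp [_ [-> Hpm]]]]]]; auto.
  { intros p q r Hp Tp Hq Tq Hr Tr [-> Hpm] Hb Hrp Hrm. left.
    split; auto. apply (lex_between_of_column_uniform S T p m r); auto. }
  { exists l, m. repeat split; auto. intros ->. exact (lex_lt_irrefl _ Hlm). }
  destruct (exists_delaunay_pair S T (fun p q => p = m /\ lex_lt m q))
    as [m' [q [Dmq [_ [Tq [-> Hmq]]]]]]; auto.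
  { intros a b r Ha Ta Hb Tb Hr Tr [-> Hmb] Hbox Hrm Hrb. right.
    split; auto. apply (lex_between_of_column_uniform S T m b r); auto. }
  { exists m, h. repeat split; auto. intros ->. exact (lex_lt_irrefl _ Hmh). }
  exists p, m, q. auto 7.
Qed.

Lemma delaunay_vertical_and_oblique S T u v w :
  bbox_closed T -> In u S -> T u -> In v S -> T v -> In w S -> T w ->
  u <> v -> fst u = fst v -> fst w <> fst u ->
  exists p q p' q', delaunay_edge S p q /\ delaunay_edge S p' q' /\
    T p /\ T q /\ T p' /\ T q' /\ fst p = fst q /\ fst p' <> fst q'.
Proof.
  intros HT Hu Tu Hv Tv Hw Tw Huv Euv Nwu.
  destruct (exists_delaunay_pair S T (fun p q => fst p = fst q))
    as [p [q [Dpq [Tp [Tq Epq]]]]]; auto.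
  { intros p q r _ _ _ _ _ _ Epq Hb _ _. left.
    rewrite (bbox_same_fst p q r (eq_sym Epq) Hb). auto. }
  { exists u, v. tauto. }
  destruct (exists_delaunay_pair S T (fun p q => fst p <> fst q))
    as [p' [q' [Dpq' [Tp' [Tq' Npq']]]]]; auto.
  { intros a b r _ _ _ _ _ _ Nab _ _ _.
    destruct (Req_EM_T (fst r) (fst b)); [right|left]; congruence. }
  { exists w, u. repeat split; auto. intros ->. auto. }
  exists p, q, p', q'. auto 8.
Qed.

Definition edge_color (F : nat) (S : list point) (p q : point) : nat :=
  2 * lca_level F (lex_rank S p) (lex_rank S q) +
  if Req_EM_T (fst p) (fst q) then 1 else 0.

Lemma edge_color_sym F S p q : edge_color F S p q = edge_color F S q p.
Proof.
  unfold edge_color. rewrite lca_level_sym.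
  destruct (Req_EM_T (fst p) (fst q)), (Req_EM_T (fst q) (fst p)); congruence.
Qed.

Lemma edge_color_lt F S p q : (edge_color F S p q < 2 * F + 2)%nat.
Proof.
  unfold edge_color. pose proof (lca_level_le F (lex_rank S p) (lex_rank S q)).
  destruct (Req_EM_T (fst p) (fst q)); lia.
Qed.

Lemma edge_color_neq_of_column F S p q p' q' :
  fst p = fst q -> fst p' <> fst q' -> edge_color F S p q <> edge_color F S p' q'.
Proof.
  unfold edge_color. intros E N.
  destruct (Req_EM_T (fst p) (fst q)), (Req_EM_T (fst p') (fst q')); try contradiction; lia.
Qed.

Lemma edge_color_neq_of_lex_chain F S p m q :
  (length S <= 2 ^ F)%nat -> In p S -> In m S -> In q S ->
  lex_lt p m -> lex_lt m q -> (fst p = fst m <-> fst m = fst q) ->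
  edge_color F S p m <> edge_color F S m q.
Proof.
  intros HF Hp Hm Hq Hpm Hmq Hpar. unfold edge_color.
  pose proof (lex_rank_lt S p m Hp Hpm). pose proof (lex_rank_lt S m q Hm Hmq).
  pose proof (lex_rank_bound S q Hq).
  pose proof (lca_level_neq F (lex_rank S p) (lex_rank S m) (lex_rank S q)) as Hneq.
  destruct (Req_EM_T (fst p) (fst m)), (Req_EM_T (fst m) (fst q)); try tauto;
    intros E; apply Hneq; lia.
Qed.

Lemma bichromatic_delaunay_edges S T F x y z :
  (length S <= 2 ^ F)%nat -> bbox_closed T ->
  In x S -> In y S -> In z S -> x <> y -> x <> z -> y <> z -> T x -> T y -> T z ->
  exists p q p' q', delaunay_edge S p q /\ delaunay_edge S p' q' /\
    T p /\ T q /\ T p' /\ T q' /\ edge_color F S p q <> edge_color F S p' q'.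
Proof.
  intros HF HT Hx Hy Hz Hxy Hxz Hyz Tx Ty Tz.
  destruct (classic (exists u v w, In u S /\ T u /\ In v S /\ T v /\ In w S /\ T w /\
                        u <> v /\ fst u = fst v /\ fst w <> fst u))
    as [[u [v [w Huvw]]]|Hmixed].
  - destruct (delaunay_vertical_and_oblique S T u v w HT)
      as [p [q [p' [q' [D [D' [Tp [Tq [Tp' [Tq' [E N]]]]]]]]]]]; try tauto.
    exists p, q, p', q'. do 6 (split; [assumption|]).
    now apply edge_color_neq_of_column.
  - assert (HU : column_uniform S T).
    { intros u v w Hu Tu Hv Tv Hw Tw Huv Euv. apply NNPP. intros Nwu.
      apply Hmixed. exists u, v, w. tauto. }
    destruct (delaunay_lex_chain S T x y z)
      as [p [m [q [Dpm [Dmq [Tp [Tm [Tq [Hpm Hmq]]]]]]]]]; auto.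
    exists p, m, m, q. do 6 (split; [assumption|]).
    destruct Dpm as [Npm [Hp [Hm _]]], Dmq as [Nmq [_ [Hq _]]].
    apply edge_color_neq_of_lex_chain; auto.
    apply (column_uniform_chain_parity S T); auto.
Qed.

Lemma ln_le x y : 0 < x -> x <= y -> ln x <= ln y.
Proof.
  intros Hx [Hxy|<-]; [left; now apply ln_increasing|right; reflexivity].
Qed.

Lemma log2_color_bound (n : nat) : (2 <= n)%nat ->
  INR (2 * S (Nat.log2 n) + 2) <= 6 / ln 2 * ln (INR n).
Proof.
  intros Hn.
  assert (Hln2 : 0 < ln 2) by (pose proof ln_lt_2; lra).
  assert (Hn2 : 2 <= INR n) by (apply (le_INR 2); auto).
  assert (Hlog : INR (Nat.log2 n) * ln 2 <= ln (INR n)).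
  { rewrite <- ln_pow by lra. apply ln_le; [apply pow_lt; lra|].
    replace 2 with (INR 2) by reflexivity. rewrite <- pow_INR. apply le_INR.
    apply Nat.log2_spec. lia. }
  assert (H2 : ln 2 <= ln (INR n)) by (apply ln_le; lra).
  replace (INR (2 * S (Nat.log2 n) + 2)) with (2 * INR (Nat.log2 n) + 4)
    by (rewrite plus_INR, mult_INR, !S_INR; simpl; ring).
  apply Rmult_le_reg_r with (ln 2); auto.
  replace (6 / ln 2 * ln (INR n) * ln 2) with (6 * ln (INR n)) by (field; lra).
  lra.
Qed.

Theorem corollary2 :
  exists c : R,
  forall S : list point,
    NoDup S -> (2 <= length S)%nat ->
    exists (k : nat) (col : point -> point -> nat),
      INR k <= c * ln (INR (length S)) /\
      (forall p q, delaunay_edge S p q -> col p q = col q p /\ (col p q < k)%nat) /\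
      (forall a b c0 d : R,
         (exists x y z, In x S /\ In y S /\ In z S /\
            x <> y /\ x <> z /\ y <> z /\
            in_rect a b c0 d x /\ in_rect a b c0 d y /\ in_rect a b c0 d z) ->
         exists p q p' q',
           delaunay_edge S p q /\ delaunay_edge S p' q' /\
           in_rect a b c0 d p /\ in_rect a b c0 d q /\
           in_rect a b c0 d p' /\ in_rect a b c0 d q' /\
           col p q <> col p' q').
Proof.
  exists (6 / ln 2). intros S _ Hlen.
  set (F := Nat.succ (Nat.log2 (length S))).
  assert (HF : (length S <= 2 ^ F)%nat)
    by (apply Nat.lt_le_incl, Nat.log2_spec; lia).
  exists (2 * F + 2)%nat, (edge_color F S). split; [|split].
  - now apply log2_color_bound.
  - intros p q _. split; [apply edge_color_sym|apply edge_color_lt].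
  - intros a b c d [x [y [z [Hx [Hy [Hz [Hxy [Hxz [Hyz [Rx [Ry Rz]]]]]]]]]]].
    apply (bichromatic_delaunay_edges S _ F x y z); auto using in_rect_bbox_closed.
Qed.
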